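(* Let $\Pi\subset\mathbb R^2$ be a convex polygon with counterclockwise extreme points $\mathbf v_1,\dots,\mathbf v_n$. For $\mathbf x\in\Pi$ let $D(\mathbf x)\in\mathbb R^{n-1}$ be the G$-$W discrepancy vector with $i$-th coordinate $q(\mathbf x,\mathbf v_i)-w(\mathbf x,\mathbf v_i)$ for $1\le i<n$, where $q$ denotes Gibbs coordinates and $w$ Wachspress coordinates. Then there is a linear subspace of $\mathbb R^{n-1}$ of dimension $n-3$ containing $D(\mathbf x)$ for every $\mathbf x\in\Pi$.
   Context: Gibbs coordinates of $\mathbf x$: the unique probability distribution $(q(\mathbf x,\mathbf v_i))_i$ with $\sum_i q(\mathbf x,\mathbf v_i)\mathbf v_i=\mathbf x$ maximizing the entropy $-\sum_i q\log q$ ($0\log0=0$). Wachspress coordinates: with $A(\mathbf p,\mathbf q,\mathbf r)=\tfrac12\det[\mathbf q-\mathbf p,\mathbf r-\mathbf p]$ and indices mod $n$, for interior $\mathbf x$ set $w_i(\mathbf x)=A(\mathbf v_{i-1},\mathbf v_i,\mathbf v_{i+1})/(A(\mathbf v_{i-1},\mathbf v_i,\mathbf x)A(\mathbf x,\mathbf v_i,\mathbf v_{i+1}))$ and $w(\mathbf x,\mathbf v_i)=w_i(\mathbf x)/\sum_jw_j(\mathbf x)$; for $\mathbf x$ on an edge $[\mathbf v_j,\mathbf v_{j+1}]$ they are the barycentric coordinates of $\mathbf x$ with respect to $\mathbf v_j,\mathbf v_{j+1}$ and $0$ elsewhere. Both systems satisfy $\sum_i c_i\mathbf v_i=\mathbf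 x$, $\sum_ic_i=1$. *)

From HB Require Import structures.
From mathcomp Require Import all_boot all_order all_algebra.
From mathcomp Require Import all_classical all_reals all_analysis.
Set Implicit Arguments. Unset Strict Implicit. Unset Printing Implicit Defensive.
Import Order.TTheory GRing.Theory Num.Theory.
Local Open Scope ring_scope.

Section Defs.
Variable R : realType.
Notation pt := (R * R)%type.

Definition area (p q r : pt) : R :=
  ((q.1 - p.1) * (r.2 - p.2) - (q.2 - p.2) * (r.1 - p.1)) / 2.

Definition comb n (c : 'I_n -> R) (v : 'I_n -> pt) : pt :=
  (\sum_i c i * (v i).1, \sum_i c i * (v i).2).

(* v_1..v_n are the (counterclockwise ordered) extreme points of a convex
   polygon: every triple of vertices taken in increasing index order is
   strictly positively oriented. *)
Definition ccw_convex_polygon n (v : 'I_n -> pt) : Prop :=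
  forall i j k : 'I_n, (i < j)%N -> (j < k)%N -> 0 < area (v i) (v j) (v k).

Definition is_prob n (c : 'I_n -> R) : Prop :=
  (forall i, 0 <= c i) /\ \sum_i c i = 1.

Definition in_polygon n (v : 'I_n -> pt) (x : pt) : Prop :=
  exists c, is_prob c /\ comb c v = x.

Definition xlogx (t : R) : R := if t == 0 then 0 else t * ln t.
Definition entropy n (c : 'I_n -> R) : R := - \sum_i xlogx (c i).

Definition is_gibbs n (v : 'I_n -> pt) (x : pt) (q : 'I_n -> R) : Prop :=
  [/\ is_prob q, comb q v = x &
      forall p, is_prob p -> comb p v = x -> entropy p <= entropy q].

Definition on_edge n (v : 'I_n -> pt) (j : 'I_n) (t : R) (x : pt) : Prop :=
  0 <= t <= 1 /\
  x = ((1 - t) * (v j).1 + t * (v (ordS j)).1,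
       (1 - t) * (v j).2 + t * (v (ordS j)).2).

Definition wach_weight n (v : 'I_n -> pt) (x : pt) (i : 'I_n) : R :=
  area (v (ord_pred i)) (v i) (v (ordS i)) /
  (area (v (ord_pred i)) (v i) x * area x (v i) (v (ordS i))).

Definition is_wachspress n (v : 'I_n -> pt) (x : pt) (w : 'I_n -> R) : Prop :=
  (exists j t, on_edge v j t x /\
     w = fun i => (if i == j then 1 - t else 0) + (if i == ordS j then t else 0))
  \/
  ((forall j t, ~ on_edge v j t x) /\
     w = fun i => wach_weight v x i / \sum_k wach_weight v x k).

(* G-W discrepancy vector in R^(n-1): i-th coordinate q_i - w_i, i < n-1 (0-based) *)
Definition discrepancy n (q w : 'I_n -> R) : 'rV[R]_(n.-1) :=
  \row_(i < n.-1) (q (widen_ord (leq_pred n) i) - w (widen_ord (leq_pred n) i)).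

End Defs.

From HB Require Import structures.
From mathcomp Require Import all_boot all_order all_algebra.
From mathcomp Require Import all_classical all_reals all_analysis.
From mathcomp Require Import ring zify.
Import Order.TTheory GRing.Theory Num.Theory.
Set Implicit Arguments. Unset Strict Implicit. Unset Printing Implicit Defensive.
Local Open Scope ring_scope.

(* Gibbs and Wachspress coordinates are both barycentric: they sum to 1 and
   reproduce x.  For Gibbs coordinates this is part of the definition; for Wachspress coordinates on an edge it is
   immediate, and at an interior point it follows from the telescoping identity
     W_i (v_i - x) = g_i - g_(i-1),   g_i = (v_i - v_(i+1)) / A(x, v_i, v_(i+1))
   for the unnormalized weights W_i.  Hence d = q - w satisfies sum_i d_i = 0
   and sum_i d_i v_i = 0; eliminating d_n leaves sum_(i<n) d_i (v_i - v_n) = 0,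
   a linear system of rank 2 since v_1 - v_n and v_2 - v_n are independent, so
   its solution space has dimension (n - 1) - 2 = n - 3. *)

Section LinearAlgebra.
Variable K : fieldType.

Lemma dim_lker_surj (aT rT : vectType K) (f : 'Hom(aT, rT)) :
  (forall y, exists x, f x = y) -> \dim (lker f) = (dim aT - dim rT)%N.
Proof.
move=> f_surj; have f_onto : limg f = fullv.
  apply/eqP; rewrite eqEsubv subvf; apply/subvP => y _.
  by have [x <-] := f_surj y; apply: memv_img; apply: memvf.
have := limg_ker_dim f fullv; rewrite capfv f_onto !dimvf => <-.
by rewrite addnK.
Qed.

Lemma mulmx_col2_surj m (M : 'M[K]_(m, 2)) (i j : 'I_m) :
  M i ord0 * M j ord_max - M i ord_max * M j ord0 != 0 ->
  forall y : 'rV_2, exists z, z *m M = y.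
Proof.
set det := _ - _ => det_neq0 y.
have ji : j != i.
  by apply: contraNneq det_neq0 => ji; rewrite /det ji mulrC subrr.
pose a := (y 0 ord0 * M j ord_max - y 0 ord_max * M j ord0) / det.
pose b := (M i ord0 * y 0 ord_max - M i ord_max * y 0 ord0) / det.
exists (\row_l (if l == i then a else if l == j then b else 0)).
apply/rowP => k; rewrite !mxE (bigD1 i) //= (bigD1 j) //= big1 ?addr0.
  2: by move=> l /andP [li lj]; rewrite !mxE (negbTE li) (negbTE lj) mul0r.
rewrite !mxE eqxx (negbTE ji) eqxx.
have [->|->] : k = ord0 \/ k = ord_max.
  by case: k => [[|[|//]]] hk; [left|right]; apply: val_inj.
all: by rewrite /a /b /det; field.
Qed.

End LinearAlgebra.

Lemma sumr_supp2 (V : nmodType) n (F : 'I_n -> V) (i j : 'I_n) : j != i ->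
  (forall k, k != i -> k != j -> F k = 0) -> \sum_k F k = F i + F j.
Proof.
move=> ji F_off; rewrite (bigD1 i) //= (bigD1 j) //= big1 ?addr0 ?addrA //.
by move=> k /andP [ki kj]; rewrite F_off.
Qed.

Section CyclicOrdinals.
Variable n : nat.
Implicit Type i : 'I_n.

Lemma val_ordS i : (ordS i : nat) = if i.+1 == n then 0%N else i.+1.
Proof.
rewrite /=; case: eqP => [->|ne]; first by rewrite modnn.
by rewrite modn_small // ltn_neqAle (ltn_ord i) andbT; apply/eqP.
Qed.

Lemma ordS_neq i : (1 < n)%N -> ordS i != i.
Proof.
move=> n_gt1; apply/negP => /eqP/(congr1 (@nat_of_ord n)); rewrite val_ordS.
by have := ltn_ord i; case: ifP => /eqP; lia.
Qed.

Lemma ord_pred_neq i : (1 < n)%N -> ord_pred i != i.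
Proof.
move=> n_gt1; apply/eqP => pred_i.
by have := ordS_neq i n_gt1; rewrite -{1}pred_i ord_predK eqxx.
Qed.

Lemma ord_pred_neq_ordS i : (2 < n)%N -> ord_pred i != ordS i.
Proof.
move=> n_gt2; apply/eqP => /(congr1 (@ordS n)); rewrite ord_predK.
move=> /(congr1 (@nat_of_ord n)); rewrite !val_ordS.
by have := ltn_ord i; do 2 case: ifP => /eqP /=; lia.
Qed.

End CyclicOrdinals.

Section Geometry.
Variable R : realType.
Notation pt := (R * R)%type.

Definition pt_coord (p : pt) (k : 'I_2) : R := if k == ord0 then p.1 else p.2.

Lemma pt_coordP (p p' : pt) :
  (forall k, pt_coord p k = pt_coord p' k) -> p = p'.
Proof.
case: p p' => [a b] [a' b'] e.
by move: (e ord0) (e ord_max); rewrite /pt_coord /= => -> ->.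
Qed.

Lemma pt_coord_comb n (c : 'I_n -> R) (v : 'I_n -> pt) k :
  pt_coord (comb c v) k = \sum_i c i * pt_coord (v i) k.
Proof. by rewrite /pt_coord; case: ifP. Qed.

Definition barycentric n (v : 'I_n -> pt) (x : pt) (c : 'I_n -> R) : Prop :=
  \sum_i c i = 1 /\ comb c v = x.

Lemma area_rotate (p q r : pt) : area p q r = area q r p.
Proof. rewrite /area; ring. Qed.

Lemma area_ppr (p r : pt) : area p p r = 0.
Proof. rewrite /area; ring. Qed.

Lemma area_prp (p r : pt) : area p r p = 0.
Proof. rewrite /area; ring. Qed.

Lemma area_comb n (c : 'I_n -> R) (v : 'I_n -> pt) (q r : pt) :
  \sum_i c i = 1 -> area (comb c v) q r = \sum_i c i * area (v i) q r.
Proof.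
move=> c_sum1.
have split_area i : c i * area (v i) q r = c i * ((q.1 * r.2 - q.2 * r.1) / 2)
   + (c i * (v i).1) * ((q.2 - r.2) / 2) + (c i * (v i).2) * ((r.1 - q.1) / 2).
  by rewrite /area; ring.
under eq_bigr do rewrite split_area.
rewrite !big_split /= -!mulr_suml c_sum1 mul1r /comb /area /=; ring.
Qed.

Lemma wach_weight_telescope (p i s x : pt) k :
  area x p i != 0 -> area x i s != 0 ->
  area p i s / (area p i x * area x i s) * (pt_coord i k - pt_coord x k) =
  (pt_coord i k - pt_coord s k) / area x i s
  - (pt_coord p k - pt_coord i k) / area x p i.
Proof.
case: p i s x => [p1 p2] [i1 i2] [s1 s2] [x1 x2].
rewrite /area /pt_coord /= !mulf_eq0 !negb_or.
move=> /andP [pi_neq0 _] /andP [is_neq0 _].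
by case: ifP => _; field; apply/andP.
Qed.


Lemma on_edge_barycentric n (v : 'I_n -> pt) j t x : on_edge v j t x ->
  barycentric v x
    (fun i => (if i == j then 1 - t else 0) + (if i == ordS j then t else 0)).
Proof.
move=> [_ ->]; set e := fun i => _ + _.
have sum_e F : \sum_i e i * F i = (1 - t) * F j + t * F (ordS j).
  under eq_bigr => i _ do rewrite mulrDl !(fun_if (fun y => y * F i)) !mul0r.
  by rewrite big_split -!big_mkcond !big_pred1_eq.
split; last by rewrite /comb !sum_e.
by under eq_bigr do rewrite -[e _]mulr1; rewrite sum_e !mulr1 subrK.
Qed.

Lemma normalized_barycentric n (v : 'I_n -> pt) x (W : 'I_n -> R) :
  \sum_i W i != 0 ->
  (forall k, \sum_i W i * (pt_coord (v i) k - pt_coord x k) = 0) ->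
  barycentric v x (fun i => W i / \sum_j W j).
Proof.
move=> sumW_neq0 W_centered; split; first by rewrite -mulr_suml divff.
apply: pt_coordP => k; rewrite pt_coord_comb.
under eq_bigr do rewrite mulrAC.
have := W_centered k; rewrite (eq_bigr _ (fun i _ => mulrBr _ _ _)) sumrB.
by rewrite -mulr_suml -mulr_suml => /subr0_eq ->; field.
Qed.

Section Polygon.
Variables (n : nat) (v : 'I_n -> pt).
Hypothesis v_ccw : ccw_convex_polygon v.

Lemma ccw_edge_area_gt0 i k :
  k != i -> k != ordS i -> 0 < area (v k) (v i) (v (ordS i)).
Proof.
move=> ki kSi; have {}ki : (k : nat) != i := ki.
have {kSi} : (k : nat) != ordS i := kSi; rewrite val_ordS.
have := ltn_ord k.
case: (eqVneq i.+1 n) => [iSn | iSn_ne] k_lt_n kSi.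
- by rewrite 2!area_rotate; apply: v_ccw; rewrite ?val_ordS ?iSn ?eqxx; lia.
- have iS : (ordS i : nat) = i.+1 by rewrite val_ordS (negbTE iSn_ne).
  case: (ltngtP k i) ki => [k_lt_i | i_lt_k | //] _.
  + by apply: v_ccw; rewrite ?iS.
  + by rewrite area_rotate; apply: v_ccw; rewrite ?iS //; lia.
Qed.

Hypothesis n_gt2 : (2 < n)%N.

Lemma interior_edge_area_gt0 x i :
  in_polygon v x -> (forall j t, ~ on_edge v j t x) ->
  0 < area x (v i) (v (ordS i)).
Proof.
move=> [c [[c_ge0 c_sum1] <-]] off_edges.
have Si_i : ordS i != i by apply: ordS_neq; lia.
have term_ge0 k : 0 <= c k * area (v k) (v i) (v (ordS i)).
  have [->|ki] := eqVneq k i; first by rewrite area_ppr mulr0.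
  have [->|kSi] := eqVneq k (ordS i); first by rewrite area_prp mulr0.
  by rewrite mulr_ge0 // ltW // ccw_edge_area_gt0.
rewrite area_comb // lt_def sumr_ge0 ?andbT //.
apply/negP => /eqP /(psumr_eq0P (fun k _ => term_ge0 k)) term0.
have c_off k : k != i -> k != ordS i -> c k = 0.
  move=> ki kSi; move/eqP: (term0 k isT).
  rewrite mulf_eq0 [area _ _ _ == 0]gt_eqF ?ccw_edge_area_gt0 //.
  by rewrite orbF => /eqP.
have c_i : c i = 1 - c (ordS i).
  by rewrite -c_sum1 (sumr_supp2 Si_i c_off) addrK.
apply: (off_edges i (c (ordS i))); split.
  by rewrite c_ge0 /= -subr_ge0 -c_i.
have cF_off (F : 'I_n -> R) k : k != i -> k != ordS i -> c k * F k = 0.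
  by move=> ki kSi; rewrite c_off ?mul0r.
by rewrite /comb !(sumr_supp2 Si_i (cF_off _)) c_i.
Qed.

Lemma wach_weight_gt0 x i :
  in_polygon v x -> (forall j t, ~ on_edge v j t x) -> 0 < wach_weight v x i.
Proof.
move=> x_in off_edges.
have := interior_edge_area_gt0 (ord_pred i) x_in off_edges; rewrite ord_predK.
rewrite /wach_weight [area _ _ x]area_rotate [area _ x _]area_rotate.
move=> area_gt0.
apply: divr_gt0; last by rewrite mulr_gt0 ?interior_edge_area_gt0.
apply: ccw_edge_area_gt0.
  by apply: ord_pred_neq; lia.
by apply: ord_pred_neq_ordS.
Qed.

Lemma wach_weight_linear_precision x k :
  in_polygon v x -> (forall j t, ~ on_edge v j t x) ->
  \sum_i wach_weight v x i * (pt_coord (v i) k - pt_coord x k) = 0.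
Proof.
move=> x_in off_edges.
have area_neq0 i : area x (v i) (v (ordS i)) != 0.
  by rewrite gt_eqF ?interior_edge_area_gt0.
pose g i :=
  (pt_coord (v i) k - pt_coord (v (ordS i)) k) / area x (v i) (v (ordS i)).
have telescope i :
    wach_weight v x i * (pt_coord (v i) k - pt_coord x k) = g i - g (ord_pred i).
  rewrite /g ord_predK /wach_weight wach_weight_telescope //.
  by rewrite -{2}(ord_predK i) area_neq0.
under eq_bigr do rewrite telescope.
by rewrite sumrB (reindex_inj (@ord_pred_inj n)) subrr.
Qed.

Lemma wachspress_barycentric x w :
  in_polygon v x -> is_wachspress v x w -> barycentric v x w.
Proof.
move=> x_in [[j [t [x_on ->]]] | [off_edges ->]].
  exact: on_edge_barycentric.
apply: normalized_barycentric => [|k]; last exact: wach_weight_linear_precision.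
rewrite psumr_neq0 => [|i _]; last exact/ltW/wach_weight_gt0.
apply/hasP; exists (Ordinal (ltnW (ltnW n_gt2))); first exact: mem_index_enum.
exact: wach_weight_gt0.
Qed.

End Polygon.

Section AffineDependences.
Variables (m : nat) (v : 'I_m.+1 -> pt).
Notation v' i := (v (widen_ord (leqnSn m) i)).

Definition vertex_diff_mx : 'M[R]_(m, 2) :=
  \matrix_(i, k) (pt_coord (v' i) k - pt_coord (v ord_max) k).

Definition affine_dep_space : {vspace 'rV[R]_m} :=
  lker (linfun (mulmxr vertex_diff_mx)).

Lemma dim_affine_dep_space (i j : 'I_m) :
  area (v' i) (v' j) (v ord_max) != 0 -> \dim affine_dep_space = (m - 2)%N.
Proof.
move=> area_neq0; rewrite dim_lker_surj ?dim_matrix ?mul1r // => y.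
have [|z <-] := @mulmx_col2_surj _ _ vertex_diff_mx i j _ y.
  apply: contraNneq area_neq0.
  rewrite 2!area_rotate !mxE /area /pt_coord /= => ->.
  by rewrite mul0r.
by exists z; rewrite lfunE.
Qed.

Lemma discrepancy_in_affine_dep_space x q w :
  barycentric v x q -> barycentric v x w ->
  discrepancy q w \in affine_dep_space.
Proof.
move=> [q_sum1 q_x] [w_sum1 w_x]; rewrite memv_ker lfunE /=.
apply/eqP/rowP => k; rewrite !mxE.
have d_sum0 : \sum_i (q i - w i) = 0 by rewrite sumrB q_sum1 w_sum1 subrr.
have d_coord0 : \sum_i (q i - w i) * pt_coord (v i) k = 0.
  rewrite (eq_bigr _ (fun i _ => mulrBl _ _ _)) sumrB -!pt_coord_comb.
  by rewrite q_x w_x subrr.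
have widen_pred (i : 'I_m) :
  widen_ord (leq_pred m.+1) i = widen_ord (leqnSn m) i by exact: val_inj.
under eq_bigr do rewrite !mxE widen_pred mulrBr.
rewrite sumrB -mulr_suml; move: d_sum0 d_coord0; rewrite !big_ord_recr /=.
by move=> /(canRL (addrK _)) -> /(canRL (addrK _)) ->; ring.
Qed.

End AffineDependences.

End Geometry.

Unset Implicit Arguments.

Theorem proposition5p8 (R : realType) (n : nat) (v : 'I_n -> R * R) :
  (3 <= n)%N -> ccw_convex_polygon v ->
  exists S : {vspace 'rV[R]_(n.-1)},
    \dim S = (n - 3)%N /\
    forall (x : R * R) (q w : 'I_n -> R),
      in_polygon v x -> is_gibbs v x q -> is_wachspress v x w ->
      discrepancy q w \in S.
Proof.
case: n v => [//|m] v n_ge3 v_ccw.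
exists (affine_dep_space v); split.
  have m_gt1 : (1 < m)%N := n_ge3.
  apply: (@dim_affine_dep_space _ _ _ (Ordinal (ltnW m_gt1)) (Ordinal m_gt1)).
  by rewrite gt_eqF // v_ccw.
move=> x q w x_in [[_ q_sum1] q_x _] w_x.
have w_bary := wachspress_barycentric v_ccw n_ge3 x_in w_x.
exact: discrepancy_in_affine_dep_space (conj q_sum1 q_x) w_bary.
Qed.
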